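(* Let $\mathcal{X}$ be a finite set and $\underline{Q}$ a lower transition rate operator on $\mathcal{L}(\mathcal{X})$. Then for any $t>0$: $\underline{Q}$ is ergodic if and only if $\underline{T}_t$ is regularly absorbing.
   Context: $\mathcal{L}(\mathcal{X})$ is the set of real-valued functions on $\mathcal{X}$ with pointwise operations and order, real constants identified with constant functions, $\mathbb{I}_A$ the indicator of $A\subseteq\mathcal{X}$, $\mathbb{I}_x\coloneqq\mathbb{I}_{\{x\}}$. A lower transition rate operator is a map $\underline{Q}\colon\mathcal{L}(\mathcal{X})\to\mathcal{L}(\mathcal{X})$ such that for all $f,g$, $\lambda\ge0$, $\mu\in\mathbb{R}$, $x,y\in\mathcal{X}$: $\underline{Q}(\mu)=0$; $\underline{Q}(f+g)\ge\underline{Q}f+\underline{Q}g$; $\underline{Q}(\lambda f)=\lambda\underline{Q}f$; $x\ne y\Rightarrow\underline{Q}(\mathbb{I}_y)(x)\ge0$. For each $f$, $t\mapsto\underline{T}_tf$ is the unique solution on $[0,\infty)$ of $\frac{d}{dt}\underline{T}_tf=\underline{Q}\,\underline{T}_tf$ with $\underline{T}_0f=f$ (existence and uniqueness are known); $\underline{T}_t$ denotes the operator $f\mapsto\underline{T}_tf$. $\underline{Q}$ is ergodic if for all $f$, $\lim_{t\to\infty}\underline{T}_tf$ exists and is a constant function. For an operator $\underline{T}$ (here $\underline{T}=\underline{T}_t$) let $\overline{T}f\coloneqq-\underline{T}(-f)$ and let powers denote composition. $\underline{T}$ is regularly absorbing if $\mathcal{X}_{\mathrm{RA}}\coloneqq\{x\in\mathcal{X}\colon\exists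 n\in\mathbb{N},\ \min\overline{T}^n\mathbb{I}_x>0\}\neq\emptyset$ and for every $x\in\mathcal{X}\setminus\mathcal{X}_{\mathrm{RA}}$ there is $n\in\mathbb{N}$ with $\underline{T}^n\mathbb{I}_{\mathcal{X}_{\mathrm{RA}}}(x)>0$. *)

From HB Require Import structures.
From mathcomp Require Import all_boot all_order all_algebra.
From mathcomp Require Import all_classical all_reals all_analysis.
Set Implicit Arguments. Unset Strict Implicit. Unset Printing Implicit Defensive.
Import Order.TTheory GRing.Theory Num.Theory.
Import numFieldNormedType.Exports.
Local Open Scope classical_set_scope.
Local Open Scope ring_scope.

Section Defs.
Variables (R : realType) (X : finType).

Definition indic1 (y : X) : X -> R := fun z => if z == y then 1 else 0.

Definition lower_rate_op (Q : (X -> R) -> (X -> R)) : Prop :=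
  [/\ forall mu : R, Q (fun _ => mu) = (fun _ => 0),
      forall (f g : X -> R) (x : X), Q f x + Q g x <= Q (fun y => f y + g y) x,
      forall (l : R) (f : X -> R), 0 <= l ->
        Q (fun y => l * f y) = (fun y => l * Q f y) &
      forall x y : X, x != y -> 0 <= Q (indic1 y) x].

(* T is the solution of d/dt T_t f = Q T_t f, T_0 f = f on [0,oo):
   at every t >= 0 the derivative is taken within [0,oo)
   (one-sided at t = 0). *)
Definition lower_semigroup (Q : (X -> R) -> (X -> R))
    (T : R -> (X -> R) -> (X -> R)) : Prop :=
  forall f : X -> R, T 0 f = f /\
    forall t : R, 0 <= t -> forall x : X,
      (fun h : R => h^-1 * (T (t + h) f x - T t f x))
        @ within (fun h : R => 0 <= t + h) (0 : R)^' --> Q (T t f) x.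

Definition ergodic (T : R -> (X -> R) -> (X -> R)) : Prop :=
  forall f : X -> R, exists c : R, forall x : X,
    (fun t : R => T t f x) @ +oo --> c.

Definition upper_op (Tl : (X -> R) -> (X -> R)) : (X -> R) -> (X -> R) :=
  fun f x => - Tl (fun y => - f y) x.

Definition in_RA (Tl : (X -> R) -> (X -> R)) (x : X) : Prop :=
  exists n : nat, forall y : X, 0 < iter n (upper_op Tl) (indic1 x) y.

Definition regularly_absorbing (Tl : (X -> R) -> (X -> R)) : Prop :=
  (exists x : X, in_RA Tl x) /\
  forall x : X, ~ in_RA Tl x ->
    exists n : nat,
      0 < iter n Tl (fun y => if `[< in_RA Tl y >] then 1 else 0) x.

End Defs.

From mathcomp Require Import all_boot all_order all_algebra.
From mathcomp Require Import all_classical all_reals all_analysis.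
From mathcomp Require Import ring lra.
Import numFieldNormedType.Exports.
Import Order.TTheory GRing.Theory Num.Theory.
Local Open Scope classical_set_scope.
Local Open Scope ring_scope.
Set Implicit Arguments. Unset Strict Implicit. Unset Printing Implicit Defensive.

(* The semigroup [T t] is a lower transition operator (superadditive, positively
   homogeneous, monotone, constant-preserving) satisfying T (r + s) = T s \o T r;
   all of this follows from uniqueness of solutions of d/dt u = Q u, which in turn
   follows from a comparison principle proved by a first-crossing-time argument.
   It then suffices to study the discrete iterates of S := T t.
   If S is regularly absorbing, then after M steps S either lowers the maximum of
   f (when f is low at some state of X_RA, whose upper reachability from every
   state is uniformly positive) or raises its minimum (the lower probability of
   reaching X_RA is uniformly positive), by a fixed fraction of the oscillation;
   so T_s f is trapped in geometrically shrinking intervals and converges to a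
   constant. Conversely, if all iterates converge to constants, the upper
   probabilities of reaching single states cannot all tend to 0 (they sum to at
   least 1), which yields a state of X_RA, and the limit of the lower
   probability of reaching X_RA is at least its value 1 on X_RA, hence positive
   everywhere. *)

Section Superlinear.
Variables (R : realType) (X : finType).
Implicit Types (f g : X -> R) (S : (X -> R) -> (X -> R)).

Definition superadditive S :=
  forall f g x, S f x + S g x <= S (fun y => f y + g y) x.

Definition pos_homogeneous S :=
  forall (l : R) f, 0 <= l -> S (fun y => l * f y) = (fun y => l * S f y).

Lemma sum_indic1 g : g = (fun y => \sum_z g z * indic1 R z y).
Proof.
apply: funext => y; rewrite (bigD1 y) //= big1 /indic1 ?eqxx ?mulr1 ?addr0 //.
by move=> z /negPf; rewrite eq_sym => ->; rewrite mulr0.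
Qed.

Lemma pos_homogeneous_cst0 S x : pos_homogeneous S -> S (fun _ => 0) x = 0.
Proof.
move=> Shom; have /(congr1 (fun h => h x)) := Shom 0 (fun _ => 0) (lexx 0).
by rewrite /= !mul0r.
Qed.

Lemma superadditive_sum S (I : finType) (l : I -> R) (F : I -> X -> R) x :
  superadditive S -> pos_homogeneous S -> (forall i, 0 <= l i) ->
  \sum_i l i * S (F i) x <= S (fun y => \sum_i l i * F i y) x.
Proof.
move=> Ssup Shom l_ge0; elim: (index_enum I) => [|i s IH].
  by rewrite big_nil; under eq_fun do rewrite big_nil; rewrite pos_homogeneous_cst0.
rewrite big_cons; under [X in _ <= S X _]eq_fun do rewrite big_cons.
apply: le_trans (Ssup _ _ x); rewrite Shom //; exact: lerD.
Qed.

Lemma superadditiveD_cst S f (mu : R) x : superadditive S ->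
  S (fun _ => mu) x + S (fun _ => - mu) x = 0 ->
  S (fun y => f y + mu) x = S f x + S (fun _ => mu) x.
Proof.
move=> Ssup Smu; apply/le_anti/andP; split; last exact: Ssup.
have := Ssup (fun y => f y + mu) (fun _ => - mu) x.
have -> : (fun y => f y + mu + - mu) = f by apply: funext => y; rewrite addrK.
lra.
Qed.

End Superlinear.

Section LowerTransitionOperator.
Variables (R : realType) (X : finType).
Implicit Types (f g : X -> R) (S : (X -> R) -> (X -> R)).

Definition lower_trans_op S : Prop :=
  [/\ superadditive S, pos_homogeneous S,
      forall mu : R, S (fun _ => mu) = (fun _ => mu) &
      forall f g, (forall x, f x <= g x) -> forall x, S f x <= S g x].

Lemma lower_trans_op_id : lower_trans_op id.
Proof. by split => //= *; exact: lexx. Qed.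

Lemma lower_trans_op_comp S1 S2 :
  lower_trans_op S1 -> lower_trans_op S2 -> lower_trans_op (fun f => S1 (S2 f)).
Proof.
case=> sup1 hom1 cst1 mono1 [sup2 hom2 cst2 mono2]; split.
- by move=> f g x; apply: le_trans (sup1 _ _ x) _; apply: mono1 => y; exact: sup2.
- by move=> l f l0; rewrite hom2 // hom1.
- by move=> mu; rewrite cst2 cst1.
- by move=> f g fg x; apply: mono1; apply: mono2.
Qed.

Lemma lower_trans_op_iter S n : lower_trans_op S -> lower_trans_op (iter n S).
Proof.
move=> HS; elim: n => [|n IH] /=; first exact: lower_trans_op_id.
exact: lower_trans_op_comp.
Qed.

Lemma upper_op_iter S n : upper_op (iter n S) = iter n (upper_op S).
Proof.
elim: n => [|n IH]; apply: funext => f; apply: funext => x.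
  by rewrite /upper_op /= opprK.
rewrite iterS -IH /upper_op /=; congr (- S _ x); apply: funext => y; by rewrite opprK.
Qed.

Section Properties.
Variable S : (X -> R) -> (X -> R).
Hypothesis HS : lower_trans_op S.

Lemma lower_trans_op_affine (c a : R) g : 0 <= c ->
  S (fun y => c * g y + a) = (fun y => c * S g y + a).
Proof.
case: HS => Ssup Shom Scst _ c0; apply: funext => x.
rewrite superadditiveD_cst // ?Scst ?addrN // Shom //.
Qed.

Lemma lower_trans_op_bounds f (a b : R) :
  (forall x, a <= f x <= b) -> forall x, a <= S f x <= b.
Proof.
case: HS => _ _ Scst Smono fab x; apply/andP; split.
  by have := Smono (fun _ => a) f _ x; rewrite Scst; apply => y; case/andP: (fab y).
by have := Smono f (fun _ => b) _ x; rewrite Scst; apply => y; case/andP: (fab y).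
Qed.

Lemma lower_trans_op_le_upper_indic1 f x (b : R) : (forall y, f y <= b) ->
  forall y, S f y <= b - (b - f x) * upper_op S (indic1 R x) y.
Proof.
move=> fb y; have bfx : 0 <= b - f x by rewrite subr_ge0.
have fle : forall w, f w <= (b - f x) * - indic1 R x w + b.
  move=> w; rewrite /indic1; case: eqP => [->|_]; first lra.
  by rewrite oppr0 mulr0 add0r.
case: (HS) => _ _ _ Smono; apply: le_trans (Smono _ _ fle y) _.
by rewrite lower_trans_op_affine // /upper_op mulrN opprK addrC.
Qed.

Lemma upper_op_mono f g :
  (forall x, f x <= g x) -> forall x, upper_op S f x <= upper_op S g x.
Proof.
case: HS => _ _ _ Smono fg x; rewrite /upper_op lerN2.
by apply: Smono => y; rewrite lerN2.
Qed.

Lemma upper_op_cst (mu : R) : upper_op S (fun _ => mu) = (fun _ => mu).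
Proof. by case: HS => _ _ Scst _; apply: funext => x; rewrite /upper_op Scst opprK. Qed.

Lemma upper_op_hom (l : R) f : 0 <= l ->
  upper_op S (fun y => l * f y) = (fun y => l * upper_op S f y).
Proof.
case: HS => _ Shom _ _ l0; apply: funext => x; rewrite /upper_op.
by under eq_fun do rewrite -mulrN; rewrite Shom // mulrN.
Qed.

Lemma upper_op_ge0 f : (forall x, 0 <= f x) -> forall x, 0 <= upper_op S f x.
Proof.
by move=> f0 x; have := upper_op_mono (f := fun _ => 0) f0 x; rewrite upper_op_cst.
Qed.

Lemma upper_op_le_sum g y : (forall z, 0 <= g z) ->
  upper_op S g y <= \sum_z g z * upper_op S (indic1 R z) y.
Proof.
case: HS => Ssup Shom _ _ g0; rewrite [in X in X <= _](sum_indic1 g) /upper_op.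
have -> : (fun w => - \sum_z g z * indic1 R z w) =
          (fun w => \sum_z g z * - indic1 R z w).
  by apply: funext => w; rewrite -sumrN; apply: eq_bigr => z _; rewrite mulrN.
under eq_bigr do rewrite mulrN.
by rewrite sumrN lerN2; exact: superadditive_sum.
Qed.

Lemma sum_upper_indic1_ge1 y : 1 <= \sum_z upper_op S (indic1 R z) y.
Proof.
have := upper_op_le_sum (g := fun _ => 1) y (fun _ => ler01).
by rewrite upper_op_cst; under eq_bigr do rewrite mul1r.
Qed.

End Properties.
End LowerTransitionOperator.

Section RegularAbsorption.
Variables (R : realType) (X : finType) (S : (X -> R) -> (X -> R)).
Hypothesis HS : lower_trans_op S.

Definition indic_RA : X -> R := fun y => if `[< in_RA S y >] then 1 else 0.

Lemma indic_RA_ge0 y : 0 <= indic_RA y.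
Proof. by rewrite /indic_RA; case: asboolP. Qed.

Lemma in_RA_upper_step y z :
  in_RA S y -> 0 < upper_op S (indic1 R z) y -> in_RA S z.
Proof.
case=> n Hn Hyz; exists n.+1 => w; rewrite iterSr.
set k := upper_op S (indic1 R z) y.
have kle : forall v, k * indic1 R y v <= upper_op S (indic1 R z) v.
  move=> v; rewrite /indic1; case: eqP => [->|_]; first by rewrite mulr1.
  by rewrite mulr0; apply: upper_op_ge0 => // q; rewrite /indic1; case: eqP.
have HSn := lower_trans_op_iter n HS.
apply: lt_le_trans (_ : _ < iter n (upper_op S) (fun v => k * indic1 R y v) w) _.
  by rewrite -upper_op_iter upper_op_hom ?ltW // upper_op_iter mulr_gt0.
by rewrite -upper_op_iter; apply: upper_op_mono.
Qed.

(* X_RA is closed under upper transitions ([in_RA_upper_step]), so [upper_op S]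
   of the indicator of its complement vanishes on X_RA. *)
Lemma indic_RA_le y : indic_RA y <= S indic_RA y.
Proof.
case: (asboolP (in_RA S y)) => Hy; last first.
  rewrite {1}/indic_RA asboolF //.
  by case: HS => _ _ Scst Smono; have := Smono _ _ indic_RA_ge0 y; rewrite Scst.
rewrite {1}/indic_RA asboolT //.
pose g : X -> R := fun w => if `[< in_RA S w >] then 0 else 1.
have -> : indic_RA = (fun w => 1 * - g w + 1).
  by apply: funext => w; rewrite /indic_RA /g; case: asboolP => _; lra.
rewrite (lower_trans_op_affine HS) // mul1r.
have : upper_op S g y <= 0.
  apply: le_trans (upper_op_le_sum HS y _) _; first by move=> z; rewrite /g; case: asboolP.
  apply: sumr_le0 => z _; rewrite /g; case: asboolP => Hz; first by rewrite mul0r.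
  by rewrite mul1r leNgt; apply/negP => Hp; apply: Hz; exact: in_RA_upper_step Hy Hp.
by rewrite /upper_op; lra.
Qed.

Lemma iter_indic_RA_le m n y : (m <= n)%N ->
  iter m S indic_RA y <= iter n S indic_RA y.
Proof.
move=> /subnK <-; move: (n - m)%N => k; elim: k m y => [|k IH] m y //.
rewrite addSnnS; apply: le_trans (IH m.+1 y); rewrite iterSr.
by case: (lower_trans_op_iter m HS) => _ _ _ Smono; apply: Smono => v; exact: indic_RA_le.
Qed.

End RegularAbsorption.

Lemma fin_pos_lower_bound (R : realType) (I : finType) (g : I -> R) :
  (forall i, 0 < g i) -> exists2 d, 0 < d & forall i, d <= g i.
Proof.
move=> g_gt0; exists (\big[Num.min/1]_i g i); last by move=> i; exact: bigmin_le.
by apply: lt_bigmin => //; exact: ltr01.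
Qed.

Lemma near_uniform_pos_lower_bound (R : realType) (I : finType) (P : I -> Prop)
    (G : I -> nat -> R) :
  (forall i, P i -> exists2 d, 0 < d & \forall n \near \oo, d <= G i n) ->
  exists2 d, 0 < d & \forall n \near \oo, forall i, P i -> d <= G i n.
Proof.
move=> HG.
have /choice [d Hd] : forall i, exists d, 0 < d /\ \forall n \near \oo, P i -> d <= G i n.
  move=> i; case: (pselect (P i)) => [/HG [d d0 Hd]|NPi].
    by exists d; split => //; apply: filterS Hd.
  by exists 1; split => //; apply: nearW => n /NPi.
have [d0 d0_gt0 d0_le] := fin_pos_lower_bound (fun i => (Hd i).1).
exists d0 => //.
have := @filter_forall nat I (fun i n => P i -> d i <= G i n) _
  eventually_filter (fun i => (Hd i).2).
apply: filterS => n Hn i Pi.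
exact: le_trans (d0_le i) (Hn i Pi).
Qed.

Section ShrinksBounds.
Variables (R : realType) (X : Type).

Definition shrinks_bounds (V : (X -> R) -> (X -> R)) (q : R) :=
  forall f (a b : R), (forall x, a <= f x <= b) ->
  exists a' b', b' - a' <= q * (b - a) /\ forall x, a' <= V f x <= b'.

Lemma shrinks_bounds_iter V M q k : 0 <= q ->
  shrinks_bounds (iter M V) q -> shrinks_bounds (iter (k * M) V) (q ^+ k).
Proof.
move=> q0 HV; elim: k => [|k IH] f a b fab.
  by exists a, b; rewrite expr0 mul1r.
have [a1 [b1 [ab1 fab1]]] := IH f a b fab.
have [a2 [b2 [ab2 fab2]]] := HV _ a1 b1 fab1.
exists a2, b2; split; last by move=> x; rewrite mulSn iterD.
by apply: le_trans ab2 _; rewrite exprS -mulrA ler_wpM2l.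
Qed.

End ShrinksBounds.

Section Sufficiency.
Variables (R : realType) (X : finType) (S : (X -> R) -> (X -> R)).
Hypotheses (HS : lower_trans_op S) (HRA : regularly_absorbing S).

Lemma upper_iter_indic_RA_unif : exists2 d : R, 0 < d &
  \forall n \near \oo, forall x, in_RA S x ->
    forall y, d <= iter n (upper_op S) (indic1 R x) y.
Proof.
have [|d d0 Hd] := @near_uniform_pos_lower_bound R (X * X)%type
  (fun p => in_RA S p.1) (fun p n => iter n (upper_op S) (indic1 R p.1) p.2).
  move=> [x y] [n0 Hn0] /=; have [d d0 Hd] := fin_pos_lower_bound Hn0.
  exists d => //; apply: filterS (nbhs_infty_ge n0) => n /subnK <-.
  rewrite iterD -upper_op_iter.
  have := upper_op_mono (lower_trans_op_iter (n - n0) HS) Hd y.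
  by rewrite upper_op_cst //; exact: lower_trans_op_iter.
by exists d => //; apply: filterS Hd => n Hn x Hx y; exact: (Hn (x, y)).
Qed.

Lemma iter_indic_RA_unif : exists2 h : R, 0 < h &
  \forall n \near \oo, forall y, h <= iter n S (indic_RA S) y.
Proof.
have [|h h0 Hh] := @near_uniform_pos_lower_bound R X (fun _ => True)
  (fun y n => iter n S (indic_RA S) y).
  move=> y _; case: (pselect (in_RA S y)) => Hy.
    exists 1 => //; apply: nearW => n.
    by apply: le_trans (iter_indic_RA_le HS y (leq0n n)); rewrite /= /indic_RA asboolT.
  have [n0 Hn0] := HRA.2 y Hy.
  exists (iter n0 S (indic_RA S) y) => //.
  by apply: filterS (nbhs_infty_ge n0) => n; exact: iter_indic_RA_le.
by exists h => //; apply: filterS Hh => n Hn y; exact: Hn.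
Qed.

(* If some state of X_RA carries a low value, [upper_op] of its indicator
   pulls everything down; otherwise [f] dominates half of the indicator of
   X_RA, which is pushed up everywhere. *)
Lemma iter_shrinks_bounds : exists M : nat, exists2 q : R, 0 <= q < 1 &
  shrinks_bounds (iter M S) q.
Proof.
have [d d0 Hd] := upper_iter_indic_RA_unif.
have [h h0 Hh] := iter_indic_RA_unif.
have [M [HdM HhM]] := filter_ex (filterI Hd Hh).
have [x0 Hx0] := HRA.1.
have HV := lower_trans_op_iter M HS.
pose e := Num.min (Num.min d h) 1 / 2.
have e0 : 0 < e by rewrite divr_gt0 // !lt_min d0 h0 ltr01.
have ed : e * 2 <= d by rewrite mulfVK // !ge_min lexx.
have eh : e * 2 <= h by rewrite mulfVK // !ge_min lexx orbT.
have e1 : e * 2 <= 1 by rewrite mulfVK // !ge_min lexx !orbT.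
exists M, (1 - e); first by apply/andP; split; lra.
move=> f a b fab.
have ab : a <= b by case/andP: (fab x0) => /le_trans; apply.
have Vfab := lower_trans_op_bounds HV fab.
case: (pselect (exists2 x, in_RA S x & f x <= (a + b) / 2)) => [[x Hx fx]|Hhigh].
  exists a, (b - (b - a) * e); split; first lra.
  move=> y; rewrite (andP (Vfab y)).1 /=.
  have fb : forall w, f w <= b by move=> w; case/andP: (fab w).
  apply: le_trans (lower_trans_op_le_upper_indic1 HV x fb y) _.
  set u := upper_op _ _ y; have du : d <= u by rewrite /u upper_op_iter; exact: HdM.
  suff : (b - a) * e <= (b - f x) * u by lra.
  apply: (@le_trans _ _ ((b - a) * (u / 2))).
    by apply: ler_wpM2l; lra.
  rewrite mulrCA mulrC; apply: ler_wpM2r; lra.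
exists (a + (b - a) * e), b; split; first lra.
move=> y; rewrite (andP (Vfab y)).2 andbT.
have fge : forall w, (b - a) / 2 * indic_RA S w + a <= f w.
  move=> w; rewrite /indic_RA; case: asboolP => Hw; last by case/andP: (fab w); lra.
  have : (a + b) / 2 < f w by rewrite ltNge; apply/negP => fw; apply: Hhigh; exists w.
  lra.
case: (HV) => _ _ _ Vmono; apply: le_trans (Vmono _ _ fge y).
rewrite (lower_trans_op_affine HV) ?divr_ge0 ?subr_ge0 //.
have := HhM y; nra.
Qed.

End Sufficiency.

Section Necessity.
Variables (R : realType) (X : finType) (S : (X -> R) -> (X -> R)).
Hypotheses (HS : lower_trans_op S) (X_gt0 : (0 < #|X|)%N).
Hypothesis S_ergodic : forall g : X -> R,
  exists c : R, forall x, iter n S g x @[n --> \oo] --> c.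

Lemma upper_iter_cvg g :
  exists c : R, forall x, iter n (upper_op S) g x @[n --> \oo] --> c.
Proof.
have [c Hc] := S_ergodic (fun w => - g w); exists (- c) => x.
have -> : (fun n => iter n (upper_op S) g x) =
          (fun n => - iter n S (fun w => - g w) x).
  by apply: funext => n; rewrite -upper_op_iter.
exact: cvgN.
Qed.

(* Otherwise every [iter n (upper_op S) (indic1 R z)] would have a nonpositive
   limit, contradicting [sum_upper_indic1_ge1]. *)
Lemma in_RA_exists : exists x, in_RA S x.
Proof.
case/card_gt0P: X_gt0 => y0 _; apply: contrapT => noRA.
have lim_le0 z : exists c : R, c <= 0 /\
    forall y, iter n (upper_op S) (indic1 R z) y @[n --> \oo] --> c.
  have [c Hc] := upper_iter_cvg (indic1 R z); exists c; split => //.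
  rewrite leNgt; apply/negP => c_gt0; apply: noRA; exists z.
  have := filter_forall eventually_filter (fun y => cvgr_gt c (Hc y) 0 c_gt0).
  by move/(_ eventually_filter)/filter_ex => [N HN]; exists N.
have /choice [c Hc] := lim_le0.
pose e : R := (#|X|%:R + 1)^-1.
have e0 : 0 < e by rewrite invr_gt0 ltr_wpDl // ler0n.
have := filter_forall eventually_filter
  (fun z => cvgr_lt (c z) ((Hc z).2 y0) (c z + e) (ltr_pwDr e0 (lexx _))).
move/(_ eventually_filter)/filter_ex => [N HN].
have := sum_upper_indic1_ge1 (lower_trans_op_iter N HS) y0.
rewrite upper_op_iter; apply/negP; rewrite -ltNge.
apply: (@le_lt_trans _ _ (\sum_(z : X) e)).
  by apply: ler_sum => z _; apply: le_trans (ltW (HN z)) _; have := (Hc z).1; lra.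
by rewrite sumr_const -mulr_natr /e mulrC ltr_pdivrMr ?ltr_wpDl ?ler0n // mul1r ltrDl.
Qed.

Lemma iter_cvg_regularly_absorbing : regularly_absorbing S.
Proof.
have [x0 Hx0] := in_RA_exists; split; first by exists x0.
move=> y _; have [c Hc] := S_ergodic (indic_RA S).
have c_ge1 : 1 <= c.
  rewrite leNgt; apply/negP => c_lt1.
  have := cvgr_lt c (Hc x0) 1 c_lt1; move/(_ eventually_filter)/filter_ex => [N HN].
  have : 1 <= iter N S (indic_RA S) x0.
    by apply: le_trans (iter_indic_RA_le HS x0 (leq0n N)); rewrite /= /indic_RA asboolT.
  lra.
have := cvgr_gt c (Hc y) 0 (lt_le_trans ltr01 c_ge1).
by move/(_ eventually_filter)/filter_ex => [N HN]; exists N.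
Qed.

End Necessity.

Section RateOperator.
Variables (R : realType) (X : finType) (Q : (X -> R) -> (X -> R)).
Hypothesis HQ : lower_rate_op Q.

Lemma lower_rate_op_superadditive : superadditive Q.
Proof. by case: HQ. Qed.

Lemma lower_rate_op_hom : pos_homogeneous Q.
Proof. by case: HQ. Qed.

Lemma lower_rate_op_cst (mu : R) x : Q (fun _ => mu) x = 0.
Proof. by case: HQ => Qcst _ _ _; rewrite Qcst. Qed.

Lemma lower_rate_opD_cst f (mu : R) x : Q (fun y => f y + mu) x = Q f x.
Proof.
rewrite superadditiveD_cst ?lower_rate_op_cst ?addr0 //.
exact: lower_rate_op_superadditive.
Qed.

Lemma lower_rate_op_ge0 g x : (forall y, 0 <= g y) -> g x = 0 -> 0 <= Q g x.
Proof.
move=> g_ge0 gx0; rewrite (sum_indic1 g).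
apply: le_trans (superadditive_sum (fun z => indic1 R z) x
  lower_rate_op_superadditive lower_rate_op_hom g_ge0).
apply: sumr_ge0 => z _; case: (eqVneq z x) => [->|zx]; first by rewrite gx0 mul0r.
by case: HQ => _ _ _ Qoff; rewrite mulr_ge0 // Qoff // eq_sym.
Qed.

End RateOperator.

Local Notation increments t := (within (fun h => 0 <= t + h) (0 : _)^').

Section Increments.
Variable R : realType.

Lemma near_incrementsP (t : R) (P : R -> Prop) :
  (\forall h \near increments t, P h) <->
  exists2 e : R, 0 < e & forall h, `|h| < e -> h != 0 -> 0 <= t + h -> P h.
Proof.
rewrite /within /prop_near1 /= /dnbhs /within /=; split.
  by move/nbhs_ballP => [e e0 He]; exists e => // h he h0 th; apply: He;
    rewrite // /ball /= sub0r normrN.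
move=> [e e0 He]; apply/nbhs_ballP; exists e => // h.
by rewrite /ball /= sub0r normrN => he hn th; exact: He.
Qed.

Lemma near_increments_neq0 (t : R) : \forall h \near increments t, h != 0.
Proof. by apply/near_incrementsP; exists 1. Qed.

Definition diff_quot (X : Type) (u : R -> X -> R) (t : R) (x : X) :=
  fun h : R => h^-1 * (u (t + h) x - u t x).

Lemma diff_quot_cont (X : Type) (u : R -> X -> R) t x (L : R) :
  diff_quot u t x @ increments t --> L ->
  (fun h => u (t + h) x) @ increments t --> u t x.
Proof.
move=> Hq.
have : (fun h => u t x + h * diff_quot u t x h) @ increments t --> u t x + 0 * L.
  apply: cvgD; first exact: cvg_cst.
  by apply: cvgM => //; do 2 apply: cvg_within_filter; exact: cvg_id.
rewrite mul0r addr0; apply: cvg_trans; apply: near_eq_cvg.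
apply: filterS (near_increments_neq0 t) => h hn.
by rewrite /diff_quot mulrA mulfV // mul1r addrC subrK.
Qed.

Lemma diff_quot_gt0_after (X : Type) (u : R -> X -> R) t x (L : R) :
  u t x = 0 -> 0 < L -> diff_quot u t x @ increments t --> L ->
  \forall h \near increments t, 0 < h -> 0 < u (t + h) x.
Proof.
move=> ut0 L0 Hq; apply: filterS (cvgr_gt L Hq 0 L0) => h.
rewrite /diff_quot ut0 subr0 => hq h0.
by have := mulr_gt0 h0 hq; rewrite mulrA mulfV ?mul1r // gt_eqF.
Qed.

End Increments.

Section Barrier.
Variables (R : realType) (X : finType) (v : R -> X -> R).
Hypothesis v_cont : forall t, 0 <= t -> forall x,
  (fun h => v (t + h) x) @ increments t --> v t x.
Hypothesis v0_ge0 : forall x, 0 <= v 0 x.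
Hypothesis v_leave0 : forall t, 0 <= t -> (forall y, 0 <= v t y) ->
  forall x, v t x = 0 -> \forall h \near increments t, 0 < h -> 0 < v (t + h) x.

Let bad := [set t | 0 <= t /\ exists x, v t x < 0].

Let bad_lbound : lbound bad 0.
Proof. by move=> t []. Qed.

Let inf_bad_ge0 : bad !=set0 -> 0 <= inf bad.
Proof. by move=> bad0; apply: lb_le_inf. Qed.

Let inf_bad_le t : bad t -> inf bad <= t.
Proof. by apply: ge_inf; exists 0. Qed.

Lemma barrier_inf_ge0 : bad !=set0 -> forall x, 0 <= v (inf bad) x.
Proof.
move=> bad0 x; have tb0 := inf_bad_ge0 bad0.
rewrite leNgt; apply/negP => vx.
have [tb_eq0|tb_gt0] : inf bad = 0 \/ 0 < inf bad.
  by move: tb0; rewrite le_eqVlt => /orP [/eqP ->|->]; [left|right].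
  by move: vx; rewrite tb_eq0; have := v0_ge0 x; lra.
have [e e0 He] := (near_incrementsP _ _).1 (cvgr_lt (v (inf bad) x) (@v_cont _ tb0 x) 0 vx).
pose h := - (Num.min e (inf bad) / 2).
have h_lt0 : h < 0 by rewrite oppr_lt0 divr_gt0 // lt_min e0 tb_gt0.
have h_ge : - (inf bad) / 2 <= h by rewrite /h -mulNr ler_wpM2r ?lerN2 ?ge_min ?lexx ?orbT.
have vh : v (inf bad + h) x < 0.
  apply: He; [|exact: ltr0_neq0|lra].
  rewrite ltr0_norm // opprK.
  by apply: (@le_lt_trans _ _ (e / 2)); [rewrite ler_wpM2r ?ge_min ?lexx | lra].
have : bad (inf bad + h) by split; [lra | exists x].
by move/inf_bad_le; lra.
Qed.

Lemma barrier_inf_after : bad !=set0 ->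
  \forall h \near increments (inf bad), 0 < h -> forall x, 0 <= v (inf bad + h) x.
Proof.
move=> bad0; have tb0 := inf_bad_ge0 bad0; have vtb := barrier_inf_ge0 bad0.
suff : \forall h \near increments (inf bad), forall x, 0 < h -> 0 <= v (inf bad + h) x.
  by apply: filterS => h Hh h0 x; exact: Hh.
apply: filter_forall => x; have [vpos|vz] : 0 < v (inf bad) x \/ v (inf bad) x = 0.
  by move: (vtb x); rewrite le_eqVlt => /orP [/eqP ->|->]; [right|left].
  by apply: filterS (cvgr_gt _ (@v_cont _ tb0 x) 0 vpos) => h hh _; exact: ltW.
by apply: filterS (v_leave0 tb0 vtb vz) => h hh /hh /ltW.
Qed.

Lemma barrier_ge0 t x : 0 <= t -> 0 <= v t x.
Proof.
move=> t0; rewrite leNgt; apply/negP => vt.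
have bad0 : bad !=set0 by exists t; split => //; exists x.
have [e e0 He] := (near_incrementsP _ _).1 (barrier_inf_after bad0).
have [s bad_s s_lt] := inf_adherent e0 (conj bad0 (ex_intro _ 0 bad_lbound)).
have := inf_bad_le bad_s; rewrite le_eqVlt => /orP [/eqP s_eq | s_gt].
  by case: bad_s => _ [y vy]; have := barrier_inf_ge0 bad0 y; rewrite s_eq; lra.
case: bad_s => s0 [y vy].
have : 0 <= v (inf bad + (s - inf bad)) y.
  apply: He.
  - by rewrite gtr0_norm ?subr_gt0 //; lra.
  - by rewrite subr_eq0 gt_eqF.
  - by rewrite addrC subrK.
  - by rewrite subr_gt0.
by rewrite addrC subrK; lra.
Qed.

End Barrier.

Section Comparison.
Variables (R : realType) (X : finType) (Q : (X -> R) -> (X -> R)).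
Hypothesis HQ : lower_rate_op Q.

(* Apply the barrier lemma to [w + eps (1 + t)], whose right derivative is
   strictly positive where it touches zero from above. *)
Lemma supersolution_ge0 (w d : R -> X -> R) :
  (forall t, 0 <= t -> forall x, diff_quot w t x @ increments t --> d t x) ->
  (forall t, 0 <= t -> forall x, Q (w t) x <= d t x) ->
  (forall x, 0 <= w 0 x) -> forall t, 0 <= t -> forall x, 0 <= w t x.
Proof.
move=> w' Qw w0 t t0 x; apply/ler_addgt0Pr => e e0.
pose eps := e / (1 + t); have eps0 : 0 < eps by rewrite divr_gt0 //; lra.
pose v s y := w s y + eps * (1 + s).
have v' s : 0 <= s -> forall y, diff_quot v s y @ increments s --> d s y + eps.
  move=> s0 y; apply: cvg_trans (cvgD (w' s s0 y) (cvg_cst eps)).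
  apply: near_eq_cvg; apply: filterS (near_increments_neq0 s) => h hn /=.
  by rewrite /diff_quot /v !fctE; field.
have : 0 <= v t x.
  apply: barrier_ge0 => //.
  - by move=> r r0 y; exact: diff_quot_cont (v' r r0 y).
  - by move=> y; rewrite /v addr0 mulr1; have := w0 y; lra.
  move=> s s0 vs_ge0 y vs0; have := lower_rate_op_ge0 HQ vs_ge0 vs0.
  rewrite /v lower_rate_opD_cst // => Qw_ge0.
  by apply: diff_quot_gt0_after vs0 _ (v' s s0 y); have := Qw s s0 y; lra.
have t1 : 1 + t != 0 by rewrite gt_eqF //; lra.
by rewrite /v /eps divfK //; lra.
Qed.

Definition solution (u : R -> X -> R) :=
  forall t, 0 <= t -> forall x, diff_quot u t x @ increments t --> Q (u t) x.

Lemma solution_le u v : solution u -> solution v -> (forall x, u 0 x <= v 0 x) ->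
  forall t, 0 <= t -> forall x, u t x <= v t x.
Proof.
move=> Hu Hv uv0 t t0 x; rewrite -subr_ge0.
apply: (@supersolution_ge0 (fun t x => v t x - u t x)
  (fun t x => Q (v t) x - Q (u t) x)) => //.
- move=> s s0 y.
  have -> : diff_quot (fun t x => v t x - u t x) s y =
            (fun h => diff_quot v s y h - diff_quot u s y h).
    by apply: funext => h; rewrite /diff_quot; ring.
  exact: cvgB (Hv s s0 y) (Hu s s0 y).
- move=> s s0 y; have := lower_rate_op_superadditive HQ (u s) (fun y => v s y - u s y) y.
  have -> : (fun y => u s y + (v s y - u s y)) = v s.
    by apply: funext => z; rewrite addrC subrK.
  lra.
- by move=> y; rewrite subr_ge0.
Qed.

Lemma solution_unique u v : solution u -> solution v -> u 0 = v 0 ->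
  forall t, 0 <= t -> u t = v t.
Proof.
move=> Hu Hv uv0 t t0; apply: funext => x; apply/le_anti/andP.
by split; apply: solution_le => // y; rewrite uv0.
Qed.

Lemma solution_cst (mu : R) : solution (fun _ _ => mu).
Proof.
move=> t t0 x; rewrite lower_rate_op_cst //.
have -> : diff_quot (fun _ _ => mu) t x = (fun _ => 0).
  by apply: funext => h; rewrite /diff_quot subrr mulr0.
exact: cvg_cst.
Qed.

End Comparison.

Lemma cvg_shrinking_bounds (R : realType) (X : Type) (u : R -> X -> R) :
  (forall e, 0 < e -> exists a b s0 : R,
     b - a < e /\ forall s, s0 <= s -> forall x, a <= u s x <= b) ->
  exists c : R, forall x, u s x @[s --> +oo] --> c.
Proof.
move=> Hb; pose L := [set a : R | exists s0, forall s, s0 <= s -> forall x, a <= u s x].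
exists (sup L) => x.
have [a1 [b1 [s1 [_ H1]]]] := Hb 1 ltr01.
have L_le b s0 : (forall s, s0 <= s -> forall x, u s x <= b) -> forall a, L a -> a <= b.
  move=> Hub a [s2 Ha]; pose s := Num.max s0 s2.
  by apply: le_trans (Ha s _ x) (Hub s _ x); rewrite le_max lexx ?orbT.
have L_sup : has_sup L.
  split; first by exists a1, s1 => s /H1 Hs y; case/andP: (Hs y).
  by exists b1; apply: (L_le b1 s1) => s /H1 Hs y; case/andP: (Hs y).
apply/cvgrPdist_lt => e e0; have [a [b [s0 [ab H]]]] := Hb e e0.
have a_le : a <= sup L.
  by apply: sup_upper_bound => //; exists s0 => s /H Hs y; case/andP: (Hs y).
have le_b : sup L <= b.
  by apply: ge_sup; [case: L_sup | apply: (L_le b s0) => s /H Hs y; case/andP: (Hs y)].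
apply: filterS (nbhs_pinfty_ge (num_real s0)) => s /H /(_ x) /andP [h1 h2].
by rewrite ltr_norml; apply/andP; split; lra.
Qed.

Section LowerSemigroup.
Variables (R : realType) (X : finType) (Q : (X -> R) -> (X -> R)).
Variable T : R -> (X -> R) -> (X -> R).
Hypotheses (HQ : lower_rate_op Q) (HT : lower_semigroup Q T).

Lemma semigroup_solution f : solution Q (fun s => T s f).
Proof. by move=> t t0 x; have [_ H] := HT f; exact: H. Qed.

Lemma semigroup0 f : T 0 f = f.
Proof. by have [] := HT f. Qed.

Lemma semigroup_cst (mu : R) s : 0 <= s -> T s (fun _ => mu) = (fun _ => mu).
Proof.
move=> s0; exact: (solution_unique HQ (@semigroup_solution _)
  (@solution_cst _ _ _ HQ mu) (semigroup0 _) s0).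
Qed.

Lemma semigroup_hom s : 0 <= s -> pos_homogeneous (T s).
Proof.
move=> s0 l f l0.
apply: (@solution_unique _ _ _ HQ (fun s => T s (fun y => l * f y))
  (fun s y => l * T s f y)) => //.
- exact: semigroup_solution.
- move=> t t0 x; rewrite (lower_rate_op_hom HQ) //.
  have -> : diff_quot (fun s y => l * T s f y) t x =
            (fun h => l * diff_quot (fun s => T s f) t x h).
    by apply: funext => h; rewrite /diff_quot; ring.
  by apply: cvgM; [exact: cvg_cst | exact: semigroup_solution].
- by rewrite !semigroup0.
Qed.

Lemma semigroupD r s f : 0 <= r -> 0 <= s -> T (r + s) f = T s (T r f).
Proof.
move=> r0 s0.
apply: (@solution_unique _ _ _ HQ (fun s => T (r + s) f) (fun s => T s (T r f))) => //.
- move=> t t0 x.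
  have -> : diff_quot (fun s => T (r + s) f) t x = diff_quot (fun s => T s f) (r + t) x.
    by apply: funext => h; rewrite /diff_quot addrA.
  apply: cvg_trans (@semigroup_solution f _ (addr_ge0 r0 t0) x).
  by apply: cvg_app; apply: within_subset => h /=; lra.
- exact: semigroup_solution.
- by rewrite addr0 semigroup0.
Qed.

Lemma semigroup_superadditive s : 0 <= s -> superadditive (T s).
Proof.
move=> s0 f g x; rewrite -subr_ge0 opprD addrA.
have Qsup := lower_rate_op_superadditive HQ.
pose fg y := f y + g y.
apply: (@supersolution_ge0 _ _ _ HQ
  (fun t y => T t fg y - T t f y - T t g y)
  (fun t y => Q (T t fg) y - Q (T t f) y - Q (T t g) y) _ _ _ s s0 x).
- move=> t t0 y.
  have -> : diff_quot (fun t y => T t fg y - T t f y - T t g y) t y =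
    (fun h => diff_quot (fun t => T t fg) t y h - diff_quot (fun t => T t f) t y h
              - diff_quot (fun t => T t g) t y h).
    by apply: funext => h; rewrite /diff_quot; ring.
  by apply: cvgB; first apply: cvgB; exact: semigroup_solution.
- move=> t t0 y; have := Qsup (T t f) (fun y => T t fg y - T t f y) y.
  have := Qsup (T t g) (fun y => T t fg y - T t f y - T t g y) y.
  have -> : (fun y => T t g y + (T t fg y - T t f y - T t g y)) =
            (fun y => T t fg y - T t f y) by apply: funext => z; ring.
  have -> : (fun y => T t f y + (T t fg y - T t f y)) = T t fg.
    by apply: funext => z; ring.
  lra.
- by move=> y; rewrite !semigroup0 /fg; lra.
Qed.

Lemma semigroup_ge0 g s : 0 <= s -> (forall x, 0 <= g x) -> forall x, 0 <= T s g x.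
Proof.
move=> s0 g0 x; apply: (solution_le HQ (@solution_cst _ _ _ HQ 0) (@semigroup_solution g)) => //.
by move=> y; rewrite semigroup0.
Qed.

Lemma semigroup_lower_trans_op s : 0 <= s -> lower_trans_op (T s).
Proof.
move=> s0; split.
- exact: semigroup_superadditive.
- exact: semigroup_hom.
- by move=> mu; exact: semigroup_cst.
move=> f g fg x.
have -> : g = (fun y => f y + (g y - f y)) by apply: funext => y; rewrite addrC subrK.
have gf0 : forall y, 0 <= g y - f y by move=> y; rewrite subr_ge0.
have := semigroup_superadditive s0 f (fun y => g y - f y) x.
have := semigroup_ge0 s0 gf0 x; lra.
Qed.

Lemma semigroup_bounds_after f (s1 s a b : R) : 0 <= s1 <= s ->
  (forall x, a <= T s1 f x <= b) -> forall x, a <= T s f x <= b.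
Proof.
case/andP=> s10 s1s fab x; rewrite -(subrKC s1 s) semigroupD ?subr_ge0 //.
have HS : lower_trans_op (T (s - s1)).
  by apply: semigroup_lower_trans_op; rewrite subr_ge0.
by have := lower_trans_op_bounds HS fab x.
Qed.

Lemma iter_semigroup (t : R) n f : 0 <= t -> iter n (T t) f = T (n%:R * t) f.
Proof.
move=> t0; elim: n => [|n IH]; first by rewrite mul0r semigroup0.
rewrite iterS IH -semigroupD ?mulr_ge0 //.
by rewrite -natr1 mulrDl mul1r.
Qed.

End LowerSemigroup.

Section Main.
Variables (R : realType) (X : finType) (Q : (X -> R) -> (X -> R)).
Variable T : R -> (X -> R) -> (X -> R).
Hypotheses (HQ : lower_rate_op Q) (HT : lower_semigroup Q T).
Variable t : R.
Hypothesis t_gt0 : 0 < t.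

Lemma ergodic_regularly_absorbing : (0 < #|X|)%N -> ergodic T -> regularly_absorbing (T t).
Proof.
move=> X_gt0 HE; have HS := semigroup_lower_trans_op HQ HT (ltW t_gt0).
apply: (iter_cvg_regularly_absorbing HS X_gt0) => g.
have [c Hc] := HE g; exists c => x.
under eq_fun do rewrite (iter_semigroup HQ HT) ?(ltW t_gt0) //.
apply: (cvg_pinftyP _ _).1 (Hc x) _ _.
apply/cvgryPge => A; apply: filterS (nbhs_infty_ger (A / t)) => n.
by rewrite ler_pdivrMr.
Qed.

Lemma regularly_absorbing_ergodic : regularly_absorbing (T t) -> ergodic T.
Proof.
move=> HRA f; apply: cvg_shrinking_bounds => eps eps0.
have HS := semigroup_lower_trans_op HQ HT (ltW t_gt0).
have [M [q /andP [q0 q1] Hq]] := iter_shrinks_bounds HS HRA.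
pose B := \sum_z `|f z|.
have fB x : - B <= f x <= B by rewrite -ler_norml /B (bigD1 x) //= lerDl sumr_ge0.
have [k Hk] : exists k, q ^+ k * (B - - B) < eps.
  have : q ^+ k * (B - - B) @[k --> \oo] --> 0 * (B - - B).
    by apply: cvgM; [apply: cvg_expr; rewrite ger0_norm | exact: cvg_cst].
  by rewrite mul0r => /cvgr_lt /(_ eps eps0) /filter_ex.
have [a [b [ab Hab]]] := shrinks_bounds_iter k q0 Hq fB.
exists a, b, ((k * M)%:R * t); split; first lra.
move=> s s_ge; apply: (semigroup_bounds_after HQ HT (s1 := (k * M)%:R * t)).
  by rewrite s_ge mulr_ge0 ?ler0n ?(ltW t_gt0).
by move=> x; rewrite -(iter_semigroup HQ HT) ?(ltW t_gt0).
Qed.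

End Main.

Theorem corollary1 (R : realType) (X : finType)
    (Q : (X -> R) -> (X -> R)) (T : R -> (X -> R) -> (X -> R)) :
  (0 < #|X|)%N ->
  lower_rate_op Q ->
  lower_semigroup Q T ->
  forall t : R, 0 < t -> (ergodic T <-> regularly_absorbing (T t)).
Proof.
move=> X_gt0 HQ HT t t_gt0; split.
  exact (ergodic_regularly_absorbing HQ HT t_gt0 X_gt0).
exact (regularly_absorbing_ergodic HQ HT t_gt0).
Qed.
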